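(* Let $(X,\tau)$ be a topological quandle and let $\{X_\alpha\}_{\alpha\in\Gamma}$ be its path components. Then each $X_\alpha$, with the subspace topology and the restricted operation, is a topological subquandle of $X$; in particular $x\triangleright y\in X_\alpha$ for all $x,y\in X_\alpha$.
   Context: A quandle is a set with a binary operation $\triangleright$ such that $x\triangleright x=x$, each $\beta_y(x)=x\triangleright y$ is bijective, and $(x\triangleright y)\triangleright z=(x\triangleright z)\triangleright(y\triangleright z)$. A topological quandle is a topological space with a continuous quandle operation $\triangleright:X\times X\to X$ such that every $\beta_y$ is a homeomorphism. A topological subquandle is a subset closed under $\triangleright$ which is a topological quandle with the subspace topology and the restricted operation. *)

From HB Require Import structures.
From mathcomp Require Import all_boot all_order all_algebra.
From mathcomp Require Import all_classical all_reals all_analysis.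
From mathcomp Require Import Rstruct Rstruct_topology.
Set Implicit Arguments. Unset Strict Implicit. Unset Printing Implicit Defensive.
Import Order.TTheory GRing.Theory Num.Theory.
Local Open Scope classical_set_scope.
Local Open Scope ring_scope.

(* Quandle axioms for a binary operation [op] (op x y = x ▷ y). *)
Definition is_quandle (X : Type) (op : X -> X -> X) : Prop :=
  [/\ forall x, op x x = x,
      forall y, bijective (fun x => op x y) &
      forall x y z, op (op x y) z = op (op x z) (op y z)].

Definition is_homeomorphism (X : topologicalType) (f : X -> X) : Prop :=
  exists g : X -> X, [/\ cancel f g, cancel g f, continuous f & continuous g].

Definition topological_quandle (X : topologicalType) (op : X -> X -> X) : Prop :=
  [/\ is_quandle op,
      continuous (fun p : X * X => op p.1 p.2) &
      forall y, is_homeomorphism (fun x => op x y)].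

(* Topological subquandle: A closed under op, and A with the subspace topology
   (the initial topology on the sigma type [set_type A]) and the restricted
   operation is a topological quandle. *)
Definition topological_subquandle (X : topologicalType) (op : X -> X -> X)
    (A : set X) : Prop :=
  (forall x y, A x -> A y -> A (op x y)) /\
  exists opA : set_type A -> set_type A -> set_type A,
    (forall a b, set_val (opA a b) = op (set_val a) (set_val b)) /\
    topological_quandle opA.

Definition path_connected_pts (X : topologicalType) (x y : X) : Prop :=
  exists f : Rdefinitions.R -> X,
    [/\ {within `[0%R, 1%R], continuous f}, f 0%R = x & f 1%R = y].

Definition path_component (X : topologicalType) (x : X) : set X :=
  [set y | path_connected_pts x y].

From HB Require Import structures.
From mathcomp Require Import all_boot all_order all_algebra.
From mathcomp Require Import all_classical all_reals all_analysis.
From mathcomp Require Import Rstruct Rstruct_topology.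
Set Implicit Arguments. Unset Strict Implicit. Unset Printing Implicit Defensive.
Import Order.TTheory GRing.Theory Num.Theory.
Local Open Scope classical_set_scope.
Local Open Scope ring_scope.

(* If x and y are joined to x0 by paths p and q, then t |-> p t ▷ q t is a
   path from x0 ▷ x0 = x0 to x ▷ y, by continuity of ▷. The inverse g of β_y
   is continuous and sends x0 ▷ y, a point of the path component A of x0, back
   to x0; hence g maps all of A into A, i.e. β_y restricts to a bijection of A.
   The restrictions of ▷ and of the inverses are continuous because the
   subspace topology is initial for the inclusion. *)

Local Notation R := Rdefinitions.R.

Lemma affine_continuous (a b : R) : continuous (fun t : R => a * t + b).
Proof.
move=> t; apply: (@continuousD _ R^o); last exact: cst_continuous.
exact: (@scaler_continuous _ R^o).
Qed.

Definition clamp01 (t : R) : R := Num.max 0 (Num.min t 1).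

Lemma clamp01_continuous : continuous clamp01.
Proof.
have -> : clamp01 = (cst 0 \max (id \min cst 1) : R -> R^o) by [].
move=> t; apply: continuous_max; first exact: cst_continuous.
by apply: continuous_min => //; exact: cst_continuous.
Qed.

Lemma clamp01_itv (t : R) : `[0, 1]%classic (clamp01 t).
Proof.
rewrite /= in_itv /= le_max lexx /=.
by rewrite ge_max ler01 ge_min lexx orbT.
Qed.

Lemma clamp01_0 : clamp01 0 = 0.
Proof. by rewrite /clamp01 (min_l ler01) maxxx. Qed.

Lemma clamp01_1 : clamp01 1 = 1.
Proof. by rewrite /clamp01 minxx max_r ?ler01. Qed.

Lemma continuous_comp_within (S T U : topologicalType) (B : set T)
    (m : S -> T) (f : T -> U) :
  continuous m -> (forall s, B (m s)) -> {within B, continuous f} ->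
  continuous (f \o m).
Proof.
move=> m_cont mB /subspace_sigL_continuousP f_cont.
pose mB' (s : S) : set_type B := exist _ (m s) (mem_set (mB s)).
have mB'_cont : continuous mB' by exact: continuous_comp_initial.
have -> : f \o m = sigL B f \o mB' by [].
by move=> s; apply: continuous_comp (mB'_cont s) (f_cont _).
Qed.

(* Paths parameterized by the whole real line: they join the same points as
   paths on [0, 1] (by clamping), and reparameterizing them never involves
   the subspace topology of [0, 1]. *)
Definition joined_by_path (X : topologicalType) (a b : X) : Prop :=
  exists p : R -> X, [/\ continuous p, p 0 = a & p 1 = b].

Lemma path_connected_ptsE (X : topologicalType) (a b : X) :
  path_connected_pts a b <-> joined_by_path a b.
Proof.
split=> [[p [p_cont p0 p1]]|[p [p_cont p0 p1]]].
  exists (p \o clamp01); split; last by rewrite /= clamp01_1.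
  - exact: continuous_comp_within clamp01_continuous clamp01_itv p_cont.
  - by rewrite /= clamp01_0.
by exists p; split => //; exact: continuous_subspaceT.
Qed.

Section joined_by_path.
Variable X : topologicalType.
Implicit Types a b c : X.

Lemma joined_by_path_refl a : joined_by_path a a.
Proof. by exists (fun=> a); split => //; exact: cst_continuous. Qed.

Lemma joined_by_path_sym a b : joined_by_path a b -> joined_by_path b a.
Proof.
move=> [p [p_cont p0 p1]]; exists (p \o (fun t => -1 * t + 1)); split.
- by move=> t; apply: continuous_comp (p_cont _); exact: affine_continuous.
- by rewrite /= mulr0 add0r.
- by rewrite /= mulN1r addNr.
Qed.

Lemma joined_by_path_trans a b c :
  joined_by_path a b -> joined_by_path b c -> joined_by_path a c.
Proof.
move=> [p [p_cont p0 p1]] [q [q_cont q0 q1]].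
pose h : R := 2^-1.
have h2 : 2 * h = 1 by rewrite mulfV ?pnatr_eq0.
exists (fun t => if t <= h then p (2 * t + 0) else q (2 * t + -1)); split.
- apply/continuous_subspace_setT.
  have -> : [set: R] = `]-oo, h] `|` `[h, +oo[.
    apply/seteqP; split => // t _ /=; rewrite !in_itv /= !andbT.
    by case: (leP t h) => ?; [left | right; exact: ltW].
  apply: withinU_continuous; [exact: interval_closed.. | |].
  + apply: (@subspace_eq_continuous _ _ _ (p \o (fun t => 2 * t + 0))).
      by move=> t; rewrite inE /= in_itv /= /from_subspace => ->.
    apply: continuous_subspaceT => t.
    by apply: continuous_comp (p_cont _); exact: affine_continuous.
  + apply: (@subspace_eq_continuous _ _ _ (q \o (fun t => 2 * t + -1))).
      move=> t; rewrite inE /= in_itv /= andbT /from_subspace => ht.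
      case: ifPn => // th.
      have -> : t = h by apply/eqP; rewrite eq_le th ht.
      by rewrite h2 addr0 addrN p1 q0.
    apply: continuous_subspaceT => t.
    by apply: continuous_comp (q_cont _); exact: affine_continuous.
- by rewrite ifT ?mulr0 ?addr0 // invr_ge0 ler0n.
- rewrite ifF; first by rewrite mulr1 addrK q1.
  by apply/negbTE; rewrite -ltNge invf_lt1 // ltr1n.
Qed.

End joined_by_path.

Lemma continuous_joined_by_path (X Y : topologicalType) (g : X -> Y) (a b : X) :
  continuous g -> joined_by_path a b -> joined_by_path (g a) (g b).
Proof.
move=> g_cont [p [p_cont p0 p1]]; exists (g \o p); split.
- by move=> t; apply: continuous_comp (g_cont _); exact: p_cont.
- by rewrite /= p0.
- by rewrite /= p1.
Qed.

Lemma continuous2_joined_by_path (X Y Z : topologicalType) (op : X -> Y -> Z)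
    (a b : X) (c d : Y) :
  continuous (fun xy : X * Y => op xy.1 xy.2) ->
  joined_by_path a b -> joined_by_path c d -> joined_by_path (op a c) (op b d).
Proof.
move=> op_cont [p [p_cont p0 p1]] [q [q_cont q0 q1]].
exists (fun t => op (p t) (q t)); split; last by rewrite p1 q1.
  move=> t; apply: continuous2_cvg;
  [exact: (op_cont (p t, q t)) | exact: p_cont | exact: q_cont].
by rewrite p0 q0.
Qed.

Lemma path_component_sub_preimage (X Y : topologicalType) (g : X -> Y)
    (x0 a : X) (y0 : Y) :
  continuous g -> path_component x0 a -> path_component y0 (g a) ->
  path_component x0 `<=` g @^-1` path_component y0.
Proof.
move=> g_cont /path_connected_ptsE x0a /path_connected_ptsE y0ga.
move=> x /path_connected_ptsE x0x.
apply/path_connected_ptsE; apply: joined_by_path_trans y0ga _.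
apply: continuous_joined_by_path g_cont _.
exact: joined_by_path_trans (joined_by_path_sym x0a) x0x.
Qed.

Lemma path_component_op (X Y Z : topologicalType) (op : X -> Y -> Z)
    (x0 x : X) (y0 y : Y) :
  continuous (fun xy : X * Y => op xy.1 xy.2) ->
  path_component x0 x -> path_component y0 y ->
  path_component (op x0 y0) (op x y).
Proof.
move=> op_cont /path_connected_ptsE x0x /path_connected_ptsE y0y.
exact/path_connected_ptsE/continuous2_joined_by_path.
Qed.

Section topological_subquandle_criterion.
Variables (X : topologicalType) (op : X -> X -> X) (A : set X).
Hypothesis opX : topological_quandle op.
Hypothesis opA : forall x y, A x -> A y -> A (op x y).
Hypothesis beta_onto :
  forall x y, A x -> A y -> exists2 x', A x' & op x' y = x.

Definition restrict_set_type (f : X -> X) (fA : forall x, A x -> A (f x))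
    (a : set_type A) : set_type A :=
  exist _ (f (set_val a)) (mem_set (fA _ (set_valP a))).

Lemma restrict_set_type_continuous (f : X -> X)
    (fA : forall x, A x -> A (f x)) :
  continuous f -> continuous (restrict_set_type fA).
Proof.
move=> f_cont; apply: continuous_comp_initial => a.
exact: continuous_comp (@initial_continuous _ _ _ a) (f_cont _).
Qed.

Definition sub_op (a b : set_type A) : set_type A :=
  exist _ (op (set_val a) (set_val b))
    (mem_set (opA (set_valP a) (set_valP b))).

Lemma sub_op_continuous : continuous (fun ab => sub_op ab.1 ab.2).
Proof.
have [_ op_cont _] := opX.
apply: continuous_comp_initial => ab; apply: continuous2_cvg.
- exact: (op_cont (set_val ab.1, set_val ab.2)).
- exact: continuous_comp cvg_fst (@initial_continuous _ _ _ _).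
- exact: continuous_comp cvg_snd (@initial_continuous _ _ _ _).
Qed.

Lemma beta_inv_closed (g : X -> X) (y : X) :
  cancel (op^~ y) g -> A y -> forall x, A x -> A (g x).
Proof. by move=> betaK Ay x /beta_onto /(_ Ay) [x' Ax' <-]; rewrite betaK. Qed.

Lemma sub_beta_homeomorphism (b : set_type A) :
  is_homeomorphism (fun a => sub_op a b).
Proof.
have [_ _ beta_homeo] := opX.
have [g [betaK gK beta_cont g_cont]] := beta_homeo (set_val b).
pose gA := beta_inv_closed betaK (set_valP b).
exists (restrict_set_type gA); split.
- by move=> a; apply: val_inj; rewrite /= betaK.
- by move=> a; apply: val_inj; rewrite /= gK.
- (* [sub_op ^~ b] is convertible to the restriction of β_b. *)
  exact: (@restrict_set_type_continuous _ (fun x Ax => opA Ax (set_valP b))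
    beta_cont).
- exact: restrict_set_type_continuous g_cont.
Qed.

Lemma topological_subquandle_criterion : topological_subquandle op A.
Proof.
have [[idem _ distr] _ _] := opX.
split=> //; exists sub_op; split=> //; split; last first.
- exact: sub_beta_homeomorphism.
- exact: sub_op_continuous.
split.
- by move=> a; apply: val_inj; rewrite /= idem.
- by move=> b; have [g [? ? _ _]] := sub_beta_homeomorphism b; exists g.
- by move=> a b c; apply: val_inj; rewrite /= distr.
Qed.

End topological_subquandle_criterion.

Section quandle_path_component.
Variables (X : topologicalType) (op : X -> X -> X) (x0 : X).
Hypothesis opX : topological_quandle op.

Lemma quandle_path_component_op x y :
  path_component x0 x -> path_component x0 y -> path_component x0 (op x y).
Proof.
have [[idem _ _] op_cont _] := opX.
move=> x0x x0y; rewrite -[x0 in path_component x0]idem.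
exact: path_component_op.
Qed.

Lemma quandle_path_component_beta_onto x y :
  path_component x0 x -> path_component x0 y ->
  exists2 x', path_component x0 x' & op x' y = x.
Proof.
have [_ _ beta_homeo] := opX.
have [g [betaK gK _ g_cont]] := beta_homeo y.
move=> x0x x0y; exists (g x); last exact: gK.
have x0x0 : path_component x0 x0.
  exact/path_connected_ptsE/joined_by_path_refl.
have x0_x0y := quandle_path_component_op x0x0 x0y.
by apply: (path_component_sub_preimage g_cont x0_x0y) x0x; rewrite /= betaK.
Qed.

End quandle_path_component.

Theorem mainTheorem14 (X : topologicalType) (op : X -> X -> X) :
  topological_quandle op ->
  forall x0 : X,
    topological_subquandle op (path_component x0) /\
    (forall x y, path_component x0 x -> path_component x0 y ->
       path_component x0 (op x y)).
Proof.
move=> opX x0; have opA := @quandle_path_component_op _ _ x0 opX.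
split=> //; apply: topological_subquandle_criterion opA _ => //.
exact: quandle_path_component_beta_onto.
Qed.
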